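(* Write $\cdot|_0$ for substitution $f_1'=0$. For every polynomial $\mathcal P$ in ten variables there exist polynomials $\mathcal P_0,\mathcal Q_0,\mathcal R_0,\mathcal S_0,\mathcal T_0,\mathcal U_0,\mathcal V_0$ in four variables such that, identically in the jet variables, $$\mathcal P(\Lambda^3|_0,\Lambda^5_1|_0,\Lambda^7_{1,1}|_0,M^8|_0,\Lambda^9_{1,1,1}|_0,M^{10}_1|_0,N^{12}|_0,K^{12}_{1,1}|_0,H^{14}_1|_0,F^{16}_{1,1}|_0)$$ $$=\mathcal P_0(\Lambda^3,\Lambda^5_1,M^8,N^{12})|_0+\Lambda^7_{1,1}\mathcal Q_0(\Lambda^5_1,\Lambda^7_{1,1},M^8,N^{12})|_0+\Lambda^9_{1,1,1}\mathcal R_0(\Lambda^7_{1,1},M^8,\Lambda^9_{1,1,1},N^{12})|_0+M^{10}_1\mathcal S_0(M^8,\Lambda^9_{1,1,1},M^{10}_1,N^{12})|_0$$ $$+K^{12}_{1,1}\mathcal T_0(\Lambda^9_{1,1,1},M^{10}_1,N^{12},K^{12}_{1,1})|_0+H^{14}_1\mathcal U_0(\Lambda^9_{1,1,1},N^{12},K^{12}_{1,1},H^{14}_1)|_0+F^{16}_{1,1}\mathcal V_0(\Lambda^9_{1,1,1},K^{12}_{1,1},H^{14}_1,F^{16}_{1,1})|_0 .$$ Moreover this representation is unique: if the right-hand side vanishes identically in $\mathbb C[f_2',f_1'',f_2'',\dots,f_1^{(5)},f_2^{(5)}]$, then $\mathcal P_0,\mathcal Q_0,\mathcal R_0,\mathcal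 S_0,\mathcal T_0,\mathcal U_0,\mathcal V_0$ are all identically zero.
   Context: $f_i^{(\lambda)}$ ($i\in\{1,2\}$, $\lambda\ge1$) are independent indeterminates; $D=\sum_{i,\lambda}f_i^{(\lambda+1)}\partial/\partial f_i^{(\lambda)}$; $\Delta^{\alpha,\beta}:=f_1^{(\alpha)}f_2^{(\beta)}-f_1^{(\beta)}f_2^{(\alpha)}$; for $P,Q$ of weights $m,n$, $[P,Q]:=n\,DP\cdot Q-m\,P\cdot DQ$ (superscripts below are weights, $f_1'$ has weight 1). $\Lambda^3:=\Delta^{1,2}$; $\Lambda^5_1:=\Delta^{1,3}f_1'-3\Delta^{1,2}f_1''$; $\Lambda^7_{1,1}:=(\Delta^{1,4}+4\Delta^{2,3})(f_1')^2-10\Delta^{1,3}f_1'f_1''+15\Delta^{1,2}(f_1'')^2$; $M^8:=3\Delta^{1,4}\Delta^{1,2}+12\Delta^{2,3}\Delta^{1,2}-5(\Delta^{1,3})^2$; $\Lambda^9_{1,1,1}:=[\Lambda^7_{1,1},f_1']$; $M^{10}_1:=[M^8,f_1']$; $N^{12}:=[M^8,\Lambda^3]$; $K^{12}_{1,1}:=[\Lambda^7_{1,1},\Lambda^5_1]/f_1'$ (this bracket is divisible by $f_1'$); $H^{14}_1:=[M^8,\Lambda^5_1]$; $F^{16}_{1,1}:=[M^8,\Lambda^7_{1,1}]$. *)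

From HB Require Import structures.
From mathcomp Require Import all_boot all_order all_algebra.
Set Implicit Arguments. Unset Strict Implicit. Unset Printing Implicit Defensive.
Import GRing.Theory Num.Theory.
Local Open Scope ring_scope.

(* Polynomials with coefficients in R in variables of type V, represented
   as polynomial expressions; [teval rho t] evaluates t at rho : V -> R. *)
Inductive term (R V : Type) : Type :=
| tC of R
| tV of V
| tAdd of term R V & term R V
| tMul of term R V & term R V
| tOpp of term R V.

Arguments tC {R V}. Arguments tV {R V}.

Fixpoint teval (R : nzRingType) (V : Type) (rho : V -> R) (t : term R V) : R :=
  match t with
  | tC c => c
  | tV v => rho v
  | tAdd a b => teval rho a + teval rho b
  | tMul a b => teval rho a * teval rho b
  | tOpp a => - teval rho a
  end.

Section Jets.
Variable R : nzRingType.

(* jet variable (i, k) stands for f_{i+1}^{(k)}, i : 'I_2, k >= 1 *)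
Definition jvar := ('I_2 * nat)%type.
Definition jpoly := term R jvar.

Definition tsub (a b : jpoly) : jpoly := tAdd a (tOpp b).
Definition tnat (n : nat) : jpoly := tC (n%:R).
Definition tsq (a : jpoly) : jpoly := tMul a a.

Definition f1 (k : nat) : jpoly := tV (ord0, k).
Definition f2 (k : nat) : jpoly := tV (ord_max, k).

Definition v1 : jvar := (ord0, 1%N).

(* the total derivation D = sum f_i^(l+1) d/d f_i^(l) *)
Fixpoint tD (t : jpoly) : jpoly :=
  match t with
  | tC _ => tC 0
  | tV (i, k) => tV (i, k.+1)
  | tAdd a b => tAdd (tD a) (tD b)
  | tMul a b => tAdd (tMul (tD a) b) (tMul a (tD b))
  | tOpp a => tOpp (tD a)
  end.

Fixpoint tset0 (t : jpoly) : jpoly :=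
  match t with
  | tC c => tC c
  | tV v => if v == v1 then tC 0 else tV v
  | tAdd a b => tAdd (tset0 a) (tset0 b)
  | tMul a b => tMul (tset0 a) (tset0 b)
  | tOpp a => tOpp (tset0 a)
  end.

(* quotient by f_1': t = t|_{f_1'=0} + f_1' * tdiv1 t  (lemma tdiv1P below);
   hence when t is divisible by f_1', tdiv1 t is the quotient t / f_1'. *)
Fixpoint tdiv1 (t : jpoly) : jpoly :=
  match t with
  | tC _ => tC 0
  | tV v => if v == v1 then tC 1 else tC 0
  | tAdd a b => tAdd (tdiv1 a) (tdiv1 b)
  | tMul a b => tAdd (tMul (tdiv1 a) b) (tMul (tset0 a) (tdiv1 b))
  | tOpp a => tOpp (tdiv1 a)
  end.

Definition jset0 (x : jvar -> R) : jvar -> R :=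
  fun v => if v == v1 then 0 else x v.

Definition Delta (a b : nat) : jpoly :=
  tsub (tMul (f1 a) (f2 b)) (tMul (f1 b) (f2 a)).

(* [P,Q] for P, Q of weights m, n *)
Definition brk (m n : nat) (P Q : jpoly) : jpoly :=
  tsub (tMul (tMul (tnat n) (tD P)) Q) (tMul (tMul (tnat m) P) (tD Q)).

Definition Lam3 : jpoly := Delta 1 2.
Definition Lam5 : jpoly :=
  tsub (tMul (Delta 1 3) (f1 1)) (tMul (tnat 3) (tMul (Delta 1 2) (f1 2))).
Definition Lam7 : jpoly :=
  tAdd (tsub (tMul (tAdd (Delta 1 4) (tMul (tnat 4) (Delta 2 3))) (tsq (f1 1)))
             (tMul (tnat 10) (tMul (Delta 1 3) (tMul (f1 1) (f1 2)))))
       (tMul (tnat 15) (tMul (Delta 1 2) (tsq (f1 2)))).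
Definition M8 : jpoly :=
  tsub (tAdd (tMul (tnat 3) (tMul (Delta 1 4) (Delta 1 2)))
             (tMul (tnat 12) (tMul (Delta 2 3) (Delta 1 2))))
       (tMul (tnat 5) (tsq (Delta 1 3))).
Definition Lam9 : jpoly := brk 7 1 Lam7 (f1 1).
Definition M10 : jpoly := brk 8 1 M8 (f1 1).
Definition N12 : jpoly := brk 8 3 M8 Lam3.
Definition K12 : jpoly := tdiv1 (brk 7 5 Lam7 Lam5).
Definition H14 : jpoly := brk 8 5 M8 Lam5.
Definition F16 : jpoly := brk 8 7 M8 Lam7.

Definition ev0 (x : jvar -> R) (t : jpoly) : R := teval (jset0 x) t.

Definition comp0 (n : nat) (Q : term R 'I_n) (L : seq jpoly) (x : jvar -> R) : R :=
  teval (fun j : 'I_n => ev0 x (nth (tC 0) L j)) Q.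

Lemma jset0_v1 (x : jvar -> R) : jset0 x v1 = 0.
Proof. by rewrite /jset0 eqxx. Qed.

Lemma tset0P (x : jvar -> R) (t : jpoly) : teval x (tset0 t) = teval (jset0 x) t.
Proof.
elim: t => [c|v|a IHa b IHb|a IHa b IHb|a IHa] //=; try by rewrite IHa ?IHb.
by rewrite /jset0; case: (v == v1).
Qed.

End Jets.

Lemma tdiv1P (R : comNzRingType) (x : jvar -> R) (t : jpoly R) :
  teval x t = teval (jset0 x) t + x v1 * teval x (tdiv1 t).
Proof.
elim: t => [c|v|a IHa b IHb|a IHa b IHb|a IHa] /=.
- by rewrite mulr0 addr0.
- rewrite /jset0; case: eqP => [->|_]; first by rewrite mulr1 add0r.
  by rewrite mulr0 addr0.
- by rewrite IHa IHb mulrDr addrACA.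
- rewrite tset0P {1}IHa mulrDl {1}IHb mulrDr mulrDr -addrA.
  congr (_ + _); rewrite addrC; congr (_ + _); rewrite !mulrA //.
  by rewrite [_ * x v1]mulrC.
- by rewrite IHa opprD mulrN.
Qed.

Arguments Lam3 {R}. Arguments Lam5 {R}. Arguments Lam7 {R}. Arguments M8 {R}.
Arguments Lam9 {R}. Arguments M10 {R}. Arguments N12 {R}. Arguments K12 {R}.
Arguments H14 {R}. Arguments F16 {R}.

From HB Require Import structures.
From mathcomp Require Import all_boot all_order all_algebra.
From mathcomp Require Import ring zify.
Import GRing.Theory Num.Theory.
Set Implicit Arguments. Unset Strict Implicit. Unset Printing Implicit Defensive.
Local Open Scope ring_scope.

(* After the substitution f_1' = 0, each of the ten generators becomes a
   nonzero constant times a monomial in the four quantities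
     u = (f_1'', f_2', M^8|_0, N^12|_0)
   (Lemma gensE; e.g. Lambda^3|_0 = - f_1'' f_2').  Both sides of the theorem
   are thus linear combinations of monomials u^f, and the theorem becomes a
   statement about exponent vectors f = (i, j, k, l):
   - existence: all exponents of products of generators lie in the cone
     j <= i <= 4j + 2k + 2l, which is the disjoint union of seven cells, the
     exponents produced by the seven summands of the right-hand side
     (cone_cells, cell_inj); hence each monomial of the left-hand side is
     produced by one summand (rhs_of_mlist);
   - uniqueness: u takes every value with f_1'' f_2' <> 0 (ujet_onto) and a
     polynomial vanishing on the torus has zero coefficients (coef_torus);
     as the cells are disjoint and injectively parametrised, a vanishing
     right-hand side has vanishing Q_p (rhs_unique).  Everything holds over any numFieldType. *)

(* Exponent vectors are sequences of naturals, a missing trailing entry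
   counting as 0; [eadd] is their sum and [elin es e] the linear combination
   \sum_i e_i * es_i. *)
Fixpoint eadd (a b : seq nat) : seq nat :=
  match a, b with
  | x :: a', y :: b' => (x + y)%N :: eadd a' b'
  | [::], _ => b
  | _, [::] => a
  end.

Definition escale (k : nat) (a : seq nat) : seq nat := map (muln k) a.

Fixpoint elin (es : seq (seq nat)) (e : seq nat) : seq nat :=
  match e with
  | [::] => [::]
  | k :: e' => eadd (escale k (head [::] es)) (elin (behead es) e')
  end.

Fixpoint uvec (i d : nat) : seq nat :=
  match d, i with
  | 0, _ => [::]
  | d'.+1, 0 => 1%N :: nseq d' 0%N
  | d'.+1, i'.+1 => 0%N :: uvec i' d'
  end.

Lemma nth_eadd a b i : nth 0%N (eadd a b) i = (nth 0%N a i + nth 0%N b i)%N.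
Proof. by elim: a b i => [|x a IH] [|y b] [|i] //=; rewrite ?addn0. Qed.

Lemma nth_escale k a i : nth 0%N (escale k a) i = (k * nth 0%N a i)%N.
Proof. by elim: a i => [|x a IH] [|i] //=; rewrite ?nth_nil ?muln0. Qed.

Lemma size_eadd a b : size (eadd a b) = maxn (size a) (size b).
Proof. by elim: a b => [|x a IH] [|y b] //=; rewrite ?maxn0 // IH maxnSS. Qed.

Lemma size_uvec i d : size (uvec i d) = d.
Proof. by elim: d i => [|d IH] [|i] //=; rewrite ?size_nseq ?IH. Qed.

Lemma size_elin d es e : all (fun a => size a == d) es ->
  (0 < size e <= size es)%N -> size (elin es e) = d.
Proof.
elim: e es => [|k e IH] [|a es] //= /andP [/eqP Ha Hes] He.
rewrite size_eadd size_map Ha.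
case: e He IH => [|k' e] He IH; first by rewrite maxn0.
by rewrite IH ?maxnn.
Qed.

Section Monomials.
Variable R : comNzRingType.
Implicit Types (rho : nat -> R) (a e : seq nat).

Fixpoint mon rho e : R :=
  match e with
  | [::] => 1
  | k :: e' => rho 0%N ^+ k * mon (fun i => rho i.+1) e'
  end.

Lemma mon_prod rho e : mon rho e = \prod_(i < size e) rho i ^+ nth 0%N e i.
Proof. by elim: e rho => [|k e IH] rho /=; rewrite ?big_ord0 // big_ord_recl IH. Qed.

Lemma mon_ext rho rho' e :
  (forall i, (i < size e)%N -> rho i = rho' i) -> mon rho e = mon rho' e.
Proof.
elim: e rho rho' => [|k e IH] rho rho' H //=.
by rewrite (H 0%N) // (IH _ (fun i => rho' i.+1)) // => i Hi; apply: H.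
Qed.

Lemma mon_eadd rho a b : mon rho (eadd a b) = mon rho a * mon rho b.
Proof.
elim: a b rho => [|x a IH] [|y b] rho /=; rewrite ?mul1r ?mulr1 //.
by rewrite IH exprD mulrACA.
Qed.

Lemma mon_escale rho k a : mon rho (escale k a) = mon rho a ^+ k.
Proof.
elim: a rho => [|x a IH] rho /=; first by rewrite expr1n.
by rewrite IH exprMn mulnC exprM.
Qed.

Lemma mon_nseq0 rho d : mon rho (nseq d 0%N) = 1.
Proof. by elim: d rho => [|d IH] rho //=; rewrite IH mulr1. Qed.

Lemma mon_uvec rho i d : (i < d)%N -> mon rho (uvec i d) = rho i.
Proof.
elim: d i rho => [|d IH] [|i] rho //= Hi; first by rewrite mon_nseq0 mulr1.
by rewrite IH // mul1r.
Qed.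

Lemma mon_elin rho (ks : seq R) es (V : nat -> R) e :
  (forall i, rho i = nth 0 ks i * mon V (nth [::] es i)) ->
  mon rho e = mon (nth 0 ks) e * mon V (elin es e).
Proof.
elim: e rho ks es => [|k e IH] rho ks es H /=; first by rewrite mulr1.
rewrite (IH _ (behead ks) (behead es)); last by move=> i; rewrite H !nth_behead.
rewrite H mon_eadd mon_escale exprMn !nth0 mulrACA.
rewrite (@mon_ext (nth 0 (behead ks)) (fun i => nth 0 ks i.+1)) //.
by move=> i _; rewrite nth_behead.
Qed.
End Monomials.

Lemma mon_neq0 (R : idomainType) (rho : nat -> R) e :
  (forall i, (i < size e)%N -> rho i != 0) -> mon rho e != 0.
Proof.
elim: e rho => [|k e IH] rho H /=; first exact: oner_neq0.
by rewrite mulf_neq0 ?expf_neq0 ?(H 0%N) // IH // => i Hi; apply: H.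
Qed.

Section Expansion.
Variable R : comNzRingType.
Implicit Types (rho : nat -> R).

(* A polynomial given as a list of (coefficient, exponent vector) pairs. *)
Definition mlist : Type := seq (R * seq nat).

Definition meval rho (L : mlist) : R := \sum_(t <- L) t.1 * mon rho t.2.

Definition coef (L : mlist) (e : seq nat) : R := \sum_(t <- L | t.2 == e) t.1.

Fixpoint expand d (t : term R 'I_d) : mlist :=
  match t with
  | tC c => [:: (c, nseq d 0%N)]
  | tV i => [:: (1, uvec i d)]
  | tAdd a b => expand a ++ expand b
  | tMul a b => [seq (s.1 * u.1, eadd s.2 u.2) | s <- expand a, u <- expand b]
  | tOpp a => [seq (- s.1, s.2) | s <- expand a]
  end.

Definition ext d (rho : 'I_d -> R) : nat -> R :=
  fun i => if insub i is Some j then rho j else 0.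

Lemma extE d (rho : 'I_d -> R) (i : 'I_d) : ext rho i = rho i.
Proof. by rewrite /ext valK. Qed.

Lemma expandP d (rho : 'I_d -> R) (t : term R 'I_d) :
  teval rho t = meval (ext rho) (expand t).
Proof.
rewrite /meval; elim: t => [c|i|a IHa b IHb|a IHa b IHb|a IHa] /=.
- by rewrite big_seq1 /= mon_nseq0 mulr1.
- by rewrite big_seq1 /= mon_uvec // mul1r extE.
- by rewrite big_cat IHa IHb.
- rewrite IHa IHb big_allpairs_dep mulr_suml; apply: eq_bigr => s _.
  by rewrite mulr_sumr; apply: eq_bigr => u _ /=; rewrite mon_eadd mulrACA.
- by rewrite IHa big_map -sumrN; apply: eq_bigr => s _ /=; rewrite mulNr.
Qed.

Lemma size_expand d (t : term R 'I_d) : all (fun s => size s.2 == d) (expand t).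
Proof.
elim: t => [c|i|a IHa b IHb|a IHa b IHb|a IHa] /=.
- by rewrite size_nseq eqxx.
- by rewrite size_uvec eqxx.
- by rewrite all_cat IHa IHb.
- apply/allP => s /allpairsP [[p q] [Hp Hq ->]] /=.
  by rewrite size_eadd (eqP (allP IHa _ Hp)) (eqP (allP IHb _ Hq)) maxnn.
- by rewrite all_map; apply: sub_all IHa => s.
Qed.

Lemma meval_ext rho rho' d (L : mlist) :
  all (fun s => size s.2 == d) L -> (forall i, (i < d)%N -> rho i = rho' i) ->
  meval rho L = meval rho' L.
Proof.
move=> HL H; rewrite /meval !big_seq; apply: eq_bigr => t /(allP HL) /eqP Ht.
by rewrite (@mon_ext _ rho rho') // Ht.
Qed.

Lemma meval_flatten rho (F : nat -> mlist) s :
  meval rho (flatten (map F s)) = \sum_(p <- s) meval rho (F p).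
Proof.
elim: s => [|q s IH] /=; first by rewrite /meval !big_nil.
by rewrite /meval big_cat big_cons -IH.
Qed.

Lemma coef_flatten (F : nat -> mlist) s e :
  coef (flatten (map F s)) e = \sum_(q <- s) coef (F q) e.
Proof.
elim: s => [|q s IH] /=; first by rewrite /coef !big_nil.
by rewrite big_cons -IH /coef big_cat.
Qed.

Lemma coef_size d (L : mlist) e :
  all (fun s => size s.2 == d) L -> size e != d -> coef L e = 0.
Proof.
move=> HL He; rewrite /coef big_seq_cond big1 // => t.
by case/andP => /(allP HL) /eqP Ht /eqP Et; move: He; rewrite -Et Ht eqxx.
Qed.

Lemma meval_coef0 rho (L : mlist) : (forall e, coef L e = 0) -> meval rho L = 0.
Proof.
move: {2}(size L) (leqnn (size L)) => n.
elim: n L => [|n IH] [|t0 L] Hs H //; rewrite /meval ?big_nil //.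
rewrite (bigID (fun t => t.2 == t0.2)) /=.
have -> : \sum_(t <- t0 :: L | t.2 == t0.2) t.1 * mon rho t.2
          = coef (t0 :: L) t0.2 * mon rho t0.2.
  by rewrite /coef mulr_suml; apply: eq_bigr => t /eqP ->.
rewrite H mul0r add0r -big_filter /= eqxx /=.
apply: IH => [|e]; first by rewrite size_filter (leq_trans (count_size _ _)).
rewrite /coef big_filter_cond.
have [->|He] := eqVneq e t0.2; first by rewrite big_pred0 // => t; case: eqP.
rewrite -[RHS](H e) /coef big_cons eq_sym (negbTE He) /=.
by apply: eq_bigl => t /=; case: (eqVneq t.2 e) => [->|]; rewrite ?andbF ?andbT.
Qed.

(* the effect on a monomial list of the substitution rho_i = k_i V^(es_i),
   followed by multiplication with kg V^ag *)
Definition msubst (kg : R) (ag : seq nat) (ks : seq R) (es : seq (seq nat))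
  (s : R * seq nat) : R * seq nat :=
  (kg * s.1 * mon (nth 0 ks) s.2, eadd ag (elin es s.2)).

Lemma meval_subst (V : nat -> R) rho kg ag ks es (L : mlist) :
  (forall i, rho i = nth 0 ks i * mon V (nth [::] es i)) ->
  kg * mon V ag * meval rho L = meval V (map (msubst kg ag ks es) L).
Proof.
move=> H; rewrite /meval big_map mulr_sumr; apply: eq_bigr => s _ /=.
rewrite (mon_elin s.2 H) mon_eadd.
by rewrite [s.1 * _]mulrA mulrACA !mulrA.
Qed.

Lemma coef_subst kg ag ks es (L : mlist) f :
  coef (map (msubst kg ag ks es) L) f =
  \sum_(t <- L | eadd ag (elin es t.2) == f) kg * t.1 * mon (nth 0 ks) t.2.
Proof. by rewrite /coef big_map. Qed.

Definition tpow d (t : term R 'I_d) (n : nat) : term R 'I_d :=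
  iter n (tMul t) (tC 1).

Definition tmono d (e : seq nat) : term R 'I_d :=
  \big[@tMul R 'I_d/tC 1]_(i < d) tpow (tV i) (nth 0%N e i).

Lemma tmonoP d (rho : 'I_d -> R) e :
  size e = d -> teval rho (tmono d e) = mon (ext rho) e.
Proof.
have tpowP (t : term R 'I_d) n : teval rho (tpow t n) = teval rho t ^+ n.
  by elim: n => [|n IH] //=; rewrite IH exprS.
move=> He; rewrite (big_morph (teval rho) (fun _ _ => erefl) erefl) mon_prod He.
by apply: eq_bigr => i _; rewrite tpowP extE.
Qed.

End Expansion.
Arguments tmono {R} d e.

Section Torus.
Variable R : numDomainType.
Implicit Types (L : mlist R) (rho : nat -> R).

(* R is infinite: a polynomial vanishing at every nonzero point is zero *)
Lemma poly_eq0_off0 (p : {poly R}) : (forall r, r != 0 -> p.[r] = 0) -> p = 0.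
Proof.
move=> H; apply/eqP/negPn/negP => Hp.
pose rs : seq R := [seq i.+1%:R | i <- iota 0 (size p)].
have rs_roots : all (root p) rs.
  by apply/allP => r /mapP [i _ ->]; rewrite rootE H // pnatr_eq0.
have rs_uniq : uniq rs.
  by rewrite map_inj_uniq ?iota_uniq // => a b /eqP; rewrite eqr_nat => /eqP [].
by have := max_poly_roots Hp rs_roots rs_uniq; rewrite size_map size_iota ltnn.
Qed.

Definition slice L (k : nat) : mlist R :=
  [seq (t.1, behead t.2) | t <- L & head 0%N t.2 == k].

Lemma size_slice d L k : all (fun s => size s.2 == d.+1) L ->
  all (fun s => size s.2 == d) (slice L k).
Proof.
move=> HL; apply/allP => s /mapP [t]; rewrite mem_filter => /andP [_ Ht] -> /=.
by rewrite size_behead (eqP (allP HL _ Ht)).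
Qed.

Lemma coef_slice d L k e : all (fun s => size s.2 == d.+1) L ->
  coef L (k :: e) = coef (slice L k) e.
Proof.
move=> HL; rewrite /coef big_map big_filter_cond big_seq_cond [RHS]big_seq_cond.
apply: eq_bigl => t; case: (boolP (t \in L)) => //= /(allP HL).
by case: t.2 => [|h tl] //= _; rewrite eqseq_cons.
Qed.

(* If L vanishes on the torus (R^* )^(d+1), then, viewing L as a polynomial
   in the first variable, each slice vanishes on (R^* )^d. *)
Lemma slice_torus d L k : all (fun s => size s.2 == d.+1) L ->
  (forall rho, (forall i, (i < d.+1)%N -> rho i != 0) -> meval rho L = 0) ->
  forall rho, (forall i, (i < d)%N -> rho i != 0) -> meval rho (slice L k) = 0.
Proof.
move=> HL H rho Hrho.
pose p : {poly R} :=
  \sum_(t <- L) (t.1 * mon rho (behead t.2)) *: 'X^(head 0%N t.2).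
have p0 : p = 0.
  apply: poly_eq0_off0 => r Hr; rewrite horner_sum.
  rewrite -[RHS](H (fun i => if i is i'.+1 then rho i' else r)); last first.
    by case=> [|i] //= /Hrho.
  rewrite /meval !big_seq; apply: eq_bigr => t /(allP HL) /eqP.
  case: t.2 => [|h tl] //= _.
  by rewrite hornerZ hornerXn -mulrA (mulrC (mon _ _)).
have := congr1 (fun q : {poly R} => q`_k) p0.
rewrite coef0 coef_sum => <-.
rewrite /meval big_map big_filter big_mkcond; apply: eq_bigr => t _ /=.
by rewrite coefZ coefXn eq_sym; case: eqP; rewrite ?mulr1 ?mulr0.
Qed.

Lemma coef_torus d L : all (fun s => size s.2 == d) L ->
  (forall rho, (forall i, (i < d)%N -> rho i != 0) -> meval rho L = 0) ->
  forall e, coef L e = 0.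
Proof.
elim: d L => [|d IH] L HL H e.
  have [->|He] := eqVneq e [::]; last by apply: (coef_size HL); rewrite size_eq0.
  have H1 : meval (fun _ => 1) L = 0 by apply: H => i; rewrite ltn0.
  rewrite -{}[RHS]H1 /meval /coef big_seq_cond [RHS]big_seq.
  apply: eq_big => [t|t /andP [/(allP HL) /eqP /size0nil Ht _]].
    by case: (boolP (t \in L)) => //= /(allP HL) /eqP /size0nil ->.
  by rewrite Ht mulr1.
case: e => [|k e]; first exact: (coef_size HL).
rewrite (coef_slice _ _ HL); apply: IH; first exact: size_slice.
exact: slice_torus.
Qed.

End Torus.

Section JetComputations.
Variable R : comNzRingType.
Implicit Types (x : jvar -> R) (a b c d : R).

Definition ujet x : nat -> R :=
  nth 0 [:: x (ord0, 2%N); x (ord_max, 1%N); ev0 x M8; ev0 x N12].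

(* the ten generators, and the constants and exponent vectors such that
   generator i equals gen_coef_i * u^(gen_exp_i) at f_1' = 0 *)
Definition gens : seq (jpoly R) :=
  [:: Lam3; Lam5; Lam7; M8; Lam9; M10; N12; K12; H14; F16].

Definition gen_coef : seq R :=
  [:: -1; 3%:R; - 15%:R; 1; 105%:R; - 8%:R; 1; 5%:R; - 5%:R; 35%:R].

Definition gen_exp : seq (seq nat) :=
  [:: [:: 1; 1; 0; 0]; [:: 2; 1; 0; 0]; [:: 3; 1; 0; 0]; [:: 0; 0; 1; 0];
      [:: 4; 1; 0; 0]; [:: 1; 0; 1; 0]; [:: 0; 0; 0; 1]; [:: 2; 0; 1; 0];
      [:: 1; 0; 0; 1]; [:: 2; 0; 0; 1]]%N.

Lemma jset0E x i k :
  jset0 x (i, k) = if (i == ord0) && (k == 1)%N then 0 else x (i, k).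
Proof. by rewrite /jset0 /v1 xpair_eqE. Qed.

Ltac jet_ring :=
  rewrite /ujet /ev0 /= /Lam3 /Lam5 /Lam7 /Lam9 /M10 /N12 /K12 /H14 /F16 /brk /M8
    /Delta /tsub /tnat /tsq /f1 /f2 /= !jset0E /=; ring.

Lemma gensE x i :
  ev0 x (nth (tC 0) gens i) = nth 0 gen_coef i * mon (ujet x) (nth [::] gen_exp i).
Proof.
case: i => [|[|[|[|[|[|[|[|[|[|i]]]]]]]]]]; last by rewrite !nth_default // mul0r.
all: jet_ring.
Qed.

Definition sjet a b c d : jvar -> R := fun v =>
  if val v.1 == 0%N then
    (if v.2 == 2%N then a else if v.2 == 4%N then c else if v.2 == 5%N then d else 0)
  else if v.2 == 1%N then b else 0.

(* the values of M^8 and N^12 on [sjet], showing that u is onto the torus *)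
Lemma sjet_M8 a b c d : ev0 (sjet a b c d) M8 = 3%:R * a * b ^+ 2 * c.
Proof. by rewrite /sjet; jet_ring. Qed.

Lemma sjet_N12 a b c d : ev0 (sjet a b c d) N12 = - 9%:R * a ^+ 2 * b ^+ 3 * d.
Proof. by rewrite /sjet; jet_ring. Qed.

End JetComputations.

Arguments gens {R}. Arguments gen_coef {R}.

Definition cone (f : seq nat) : bool :=
  (nth 0 f 1 <= nth 0 f 0 <= 4 * nth 0 f 1 + 2 * nth 0 f 2 + 2 * nth 0 f 3)%N.

Lemma cone_eadd a b : cone a -> cone b -> cone (eadd a b).
Proof. by rewrite /cone !nth_eadd => /andP [? ?] /andP [? ?]; apply/andP; split; lia. Qed.

Lemma cone_escale k a : cone a -> cone (escale k a).
Proof. by rewrite /cone !nth_escale => /andP [? ?]; apply/andP; split; nia. Qed.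

Lemma cone_elin es e : all cone es -> cone (elin es e).
Proof.
elim: e es => [|k e IH] es Hes //=.
apply: cone_eadd; first by apply: cone_escale; case: es Hes => //= a es /andP [].
by apply: IH; case: es Hes => //= a es /andP [].
Qed.

(* Summand p (p < 7) of the theorem is (lead_p) * Q_p(args_p); generators are
   referred to by their position in [gens]. *)
Definition piece_args (p : nat) : seq nat :=
  nth [::] [:: [:: 0; 1; 3; 6]; [:: 1; 2; 3; 6]; [:: 2; 3; 4; 6]; [:: 3; 4; 5; 6];
               [:: 4; 5; 6; 7]; [:: 4; 6; 7; 8]; [:: 4; 7; 8; 9]]%N p.

Definition piece_lead (p : nat) : option nat :=
  nth None [:: None; Some 2; Some 4; Some 5; Some 7; Some 8; Some 9]%N p.

Definition lead_exp (p : nat) : seq nat :=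
  if piece_lead p is Some i then nth [::] gen_exp i else [::].

Definition piece_exps (p : nat) : seq (seq nat) :=
  map (nth [::] gen_exp) (piece_args p).

Definition piece_mon (p : nat) (e : seq nat) : seq nat :=
  eadd (lead_exp p) (elin (piece_exps p) e).

(* explicitly, summand p covers the lattice points of the cell [cell p] *)
Definition cell (p a b c d : nat) : seq nat :=
  match p with
  | 0 => [:: a + 2 * b; a + b; c; d]
  | 1 => [:: 3 + 2 * a + 3 * b; 1 + a + b; c; d]
  | 2 => [:: 4 + 3 * a + 4 * c; 1 + a + c; b; d]
  | 3 => [:: 1 + 4 * b + c; b; 1 + a + c; d]
  | 4 => [:: 2 + 4 * a + b + 2 * d; a; 1 + b + d; c]
  | 5 => [:: 1 + 4 * a + 2 * c + d; a; c; 1 + b + d]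
  | _ => [:: 2 + 4 * a + 2 * b + c + 2 * d; a; b; 1 + c + d]
  end%N.

Lemma piece_monE p a b c d : (p < 7)%N -> piece_mon p [:: a; b; c; d] = cell p a b c d.
Proof.
by case: p => [|[|[|[|[|[|[|p]]]]]]] // _; rewrite /piece_mon /= /escale /=;
  congr [:: _; _; _; _]; lia.
Qed.

Lemma cell_inj p q a b c d a' b' c' d' : (p < 7)%N -> (q < 7)%N ->
  cell p a b c d = cell q a' b' c' d' -> p = q /\ [:: a; b; c; d] = [:: a'; b'; c'; d'].
Proof.
case: p => [|[|[|[|[|[|[|p]]]]]]] // _; case: q => [|[|[|[|[|[|[|q]]]]]]] // _ /=;
  case=> *; (split; [lia | congr [:: _; _; _; _]; lia]).
Qed.

Lemma cone_cells i j k l : cone [:: i; j; k; l] ->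
  exists p a b c d, (p < 7)%N /\ cell p a b c d = [:: i; j; k; l].
Proof.
rewrite /cone /= => /andP [Hji Hi].
have [H0|H0] := leqP i (2 * j).
  by exists 0%N, (2 * j - i)%N, (i - j)%N, k, l; split=> //=;
    congr [:: _; _; _; _]; lia.
have [H1|H1] := leqP i (3 * j).
  by exists 1%N, (3 * j - i)%N, (i - 2 * j - 1)%N, k, l; split=> //=;
    congr [:: _; _; _; _]; lia.
have [H2|H2] := leqP i (4 * j).
  by exists 2%N, (4 * j - i)%N, k, (i - 3 * j - 1)%N, l; split=> //=;
    congr [:: _; _; _; _]; lia.
have [H3|H3] := leqP i (4 * j + k).
  by exists 3%N, (4 * j + k - i)%N, j, (i - 4 * j - 1)%N, l; split=> //=;
    congr [:: _; _; _; _]; lia.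
have [H4|H4] := leqP i (4 * j + 2 * k).
  by exists 4%N, j, (4 * j + 2 * k - i)%N, l, (i - 4 * j - k - 1)%N; split=> //=;
    congr [:: _; _; _; _]; lia.
have [H5|H5] := leqP i (4 * j + 2 * k + l).
  by exists 5%N, j, (4 * j + 2 * k + l - i)%N, k, (i - 4 * j - 2 * k - 1)%N;
    split=> //=; congr [:: _; _; _; _]; lia.
by exists 6%N, j, k, (4 * j + 2 * k + 2 * l - i)%N, (i - 4 * j - 2 * k - l - 1)%N;
  split=> //=; congr [:: _; _; _; _]; lia.
Qed.

Lemma piece_mon_inj p q e e' : (p < 7)%N -> (q < 7)%N -> size e = 4 -> size e' = 4 ->
  piece_mon q e' = piece_mon p e -> q = p /\ e' = e.
Proof.
move=> Hp Hq; case: e => [|a [|b [|c [|d [|? ?]]]]] // _.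
case: e' => [|a' [|b' [|c' [|d' [|? ?]]]]] // _.
by rewrite !piece_monE // => /cell_inj; apply.
Qed.

Lemma size_piece_mon p e : (p < 7)%N -> size e = 4 -> size (piece_mon p e) = 4.
Proof.
move=> Hp; case: e => [|a [|b [|c [|d [|? ?]]]]] // _; rewrite piece_monE //.
by case: p Hp => [|[|[|[|[|[|[|p]]]]]]].
Qed.

Lemma cone_piece_mon f : cone f -> size f = 4 ->
  exists p e, [/\ (p < 7)%N, size e = 4 & piece_mon p e = f].
Proof.
case: f => [|i [|j [|k [|l [|? ?]]]]] // /cone_cells [p [a [b [c [d [Hp Hf]]]]]] _.
by exists p, [:: a; b; c; d]; rewrite piece_monE.
Qed.

(* keep ev0 folded: unfolding it would expose whole jet polynomials *)
Arguments ev0 : simpl never.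

Section Summands.
Variable R : numFieldType.
Implicit Types (x : jvar -> R) (p : nat) (Qs : nat -> term R 'I_4).

Lemma ujet_onto (r : nat -> R) : r 0%N != 0 -> r 1%N != 0 ->
  exists x, forall i, (i < 4)%N -> ujet x i = r i.
Proof.
move=> r0 r1.
have c8 : 3%:R * r 0%N * r 1%N ^+ 2 != 0 by rewrite !mulf_neq0 ?expf_neq0 ?pnatr_eq0.
have c12 : - 9%:R * r 0%N ^+ 2 * r 1%N ^+ 3 != 0.
  by rewrite !mulf_neq0 ?expf_neq0 ?oppr_eq0 ?pnatr_eq0.
exists (sjet (r 0%N) (r 1%N) (r 2%N / (3%:R * r 0%N * r 1%N ^+ 2))
                              (r 3%N / (- 9%:R * r 0%N ^+ 2 * r 1%N ^+ 3))).
case=> [|[|[|[|i]]]] // _; rewrite /ujet /=.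
- by rewrite sjet_M8 mulrC divfK.
- by rewrite sjet_N12 mulrC divfK.
Qed.

Definition pieces p : seq (jpoly R) := map (nth (tC 0) gens) (piece_args p).
Definition lead p : jpoly R :=
  if piece_lead p is Some i then nth (tC 0) gens i else tC 1.
Definition piece_coefs p : seq R := map (nth 0 gen_coef) (piece_args p).
Definition lead_cst p : R := if piece_lead p is Some i then nth 0 gen_coef i else 1.

Lemma leadE x p : ev0 x (lead p) = lead_cst p * mon (ujet x) (lead_exp p).
Proof.
by rewrite /lead /lead_cst /lead_exp; case: piece_lead => [i|]; rewrite ?(@gensE R) ?mulr1.
Qed.

Lemma lead_cst_neq0 p : lead_cst p != 0.
Proof.
by case: p => [|[|[|[|[|[|[|p]]]]]]];
  rewrite /lead_cst /piece_lead /= ?nth_nil ?oppr_eq0 ?oner_eq0 ?pnatr_eq0.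
Qed.

Lemma ext_gens d (idx : seq nat) x i : size idx = d ->
  ext (fun j : 'I_d => ev0 x (nth (tC 0) (map (nth (tC 0) gens) idx) j)) i
  = nth 0 (map (nth 0 gen_coef) idx) i
    * mon (ujet x) (nth [::] (map (nth [::] gen_exp) idx) i).
Proof.
move=> Hidx; rewrite /ext; case: insubP => [j _ <-|]; last first.
  by rewrite -leqNgt -Hidx => Hi; rewrite nth_default ?size_map // mul0r.
by rewrite !(nth_map 0%N) ?Hidx ?ltn_ord // (@gensE R).
Qed.

Lemma comp0_gens d (idx : seq nat) kg ag (Q : term R 'I_d) x : size idx = d ->
  kg * mon (ujet x) ag * comp0 Q (map (nth (tC 0) gens) idx) x
  = meval (ujet x) (map (msubst kg ag (map (nth 0 gen_coef) idx)
                                      (map (nth [::] gen_exp) idx)) (expand Q)).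
Proof.
by move=> Hidx; rewrite /comp0 expandP; apply: meval_subst => i; rewrite ext_gens.
Qed.

Definition piece_subst p : R * seq nat -> R * seq nat :=
  msubst (lead_cst p) (lead_exp p) (piece_coefs p) (piece_exps p).

Lemma size_piece_args p : (p < 7)%N -> size (piece_args p) = 4.
Proof. by case: p => [|[|[|[|[|[|[|p]]]]]]]. Qed.

Lemma piece_expand p (Q : term R 'I_4) x : (p < 7)%N ->
  ev0 x (lead p) * comp0 Q (pieces p) x = meval (ujet x) (map (piece_subst p) (expand Q)).
Proof. by move=> Hp; rewrite leadE comp0_gens // size_piece_args. Qed.

Lemma gens_expand (P : term R 'I_10) x :
  comp0 P gens x = meval (ujet x) (map (msubst 1 [::] gen_coef gen_exp) (expand P)).
Proof.
have := comp0_gens 1 [::] P x (size_iota 0 10).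
by rewrite [mon _ [::]]/= !mul1r => ->.
Qed.

(* the constants produced by summand p do not vanish (characteristic 0) *)
Lemma piece_coefs_mon_neq0 p e : (p < 7)%N -> size e = 4 ->
  mon (nth 0 (piece_coefs p)) e != 0 :> R.
Proof.
move=> Hp He; apply: mon_neq0 => i; rewrite He.
by case: p Hp => [|[|[|[|[|[|[|p]]]]]]] // _; case: i => [|[|[|[|i]]]] // _;
  rewrite /= ?oppr_eq0 ?oner_eq0 ?pnatr_eq0.
Qed.

Definition rhs Qs x : R :=
  \sum_(p <- iota 0 7) ev0 x (lead p) * comp0 (Qs p) (pieces p) x.

Lemma rhsE Qs x : rhs Qs x =
  comp0 (Qs 0%N) [:: Lam3; Lam5; M8; N12] x
  + ev0 x Lam7 * comp0 (Qs 1%N) [:: Lam5; Lam7; M8; N12] x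
  + ev0 x Lam9 * comp0 (Qs 2%N) [:: Lam7; M8; Lam9; N12] x
  + ev0 x M10 * comp0 (Qs 3%N) [:: M8; Lam9; M10; N12] x
  + ev0 x K12 * comp0 (Qs 4%N) [:: Lam9; M10; N12; K12] x
  + ev0 x H14 * comp0 (Qs 5%N) [:: Lam9; N12; K12; H14] x
  + ev0 x F16 * comp0 (Qs 6%N) [:: Lam9; K12; H14; F16] x.
Proof.
rewrite /rhs !big_cons big_nil addr0 !addrA.
by congr (_ + _ + _ + _ + _ + _ + _); exact: mul1r.
Qed.

Lemma monomial_summand c f : cone f -> size f = 4 ->
  exists p, (p < 7)%N /\ exists Q : term R 'I_4,
    forall x, ev0 x (lead p) * comp0 Q (pieces p) x = c * mon (ujet x) f.
Proof.
move=> Hf Hs; have [p [e [Hp He <-]]] := cone_piece_mon Hf Hs.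
exists p; split=> //.
exists (tMul (tC (c / (lead_cst p * mon (nth 0 (piece_coefs p)) e))) (tmono 4 e)) => x.
rewrite leadE /comp0 /= tmonoP //.
rewrite (mon_elin e (fun i => ext_gens x i (size_piece_args Hp))) /piece_mon mon_eadd.
by field; rewrite piece_coefs_mon_neq0 ?lead_cst_neq0.
Qed.

Lemma gens_expand_cone (P : term R 'I_10) :
  all (fun s => cone s.2 && (size s.2 == 4))
      (map (msubst 1 [::] gen_coef gen_exp) (expand P)).
Proof.
rewrite all_map; apply/allP => s /(allP (size_expand P)) /eqP Hs /=.
by rewrite cone_elin // (size_elin (d := 4)) ?Hs.
Qed.

Lemma rhs_of_mlist (L : mlist R) : all (fun s => cone s.2 && (size s.2 == 4)) L ->
  exists Qs, forall x, rhs Qs x = meval (ujet x) L.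
Proof.
elim: L => [|[c f] L IH] /=.
  exists (fun _ => tC 0) => x; rewrite /meval big_nil /rhs big1 // => p _.
  by rewrite /comp0 /= mulr0.
case/andP => /andP [Hf /eqP Hs] /IH [Qs HQs].
have [p [Hp [Q HQ]]] := monomial_summand c Hf Hs.
exists (fun q => if q == p then tAdd Q (Qs q) else Qs q) => x.
have p_iota : p \in iota 0 7 by rewrite mem_iota.
rewrite /meval big_cons -/(meval _ L) -HQs -HQ /rhs !(bigD1_seq p) ?iota_uniq //=.
rewrite eqxx {1}/comp0 /= mulrDr -!addrA.
by congr (_ + (_ + _)); apply: eq_bigr => q /negbTE ->.
Qed.

Lemma coef_piece q p e (L : mlist R) : (q < 7)%N -> (p < 7)%N -> size e = 4 ->
  all (fun s => size s.2 == 4) L ->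
  coef (map (piece_subst q) L) (piece_mon p e)
  = if q == p then lead_cst p * mon (nth 0 (piece_coefs p)) e * coef L e else 0.
Proof.
move=> Hq Hp He HL; rewrite coef_subst.
have [->|Hqp] := eqVneq q p; last first.
  rewrite big1_seq // => t /andP [/eqP Ht /(allP HL) /eqP Hts].
  by have [/eqP] := piece_mon_inj Hp Hq He Hts Ht; rewrite (negbTE Hqp).
have same t : t \in L -> (piece_mon p t.2 == piece_mon p e) = (t.2 == e).
  move=> /(allP HL) /eqP Hts.
  by apply/eqP/eqP => [/(piece_mon_inj Hp Hp He Hts) []|->].
rewrite /coef mulr_sumr big_seq_cond [RHS]big_seq_cond.
apply: eq_big => [t|t /andP [Ht]]; first by case: (boolP (t \in L)) => //= /same.
by rewrite same // => /eqP ->; rewrite mulrAC.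
Qed.

Lemma rhs_unique Qs : (forall x, rhs Qs x = 0) ->
  forall p, (p < 7)%N -> forall rho : 'I_4 -> R, teval rho (Qs p) = 0.
Proof.
move=> H0 p Hp rho.
pose F := flatten [seq map (piece_subst q) (expand (Qs q)) | q <- iota 0 7].
have F_size : all (fun s => size s.2 == 4) F.
  apply/allP => t /flatten_mapP [q]; rewrite mem_iota => /andP [_ Hq] /mapP [s Hs ->].
  by rewrite /= size_piece_mon // (eqP (allP (size_expand _) _ Hs)).
have F_rhs x : rhs Qs x = meval (ujet x) F.
  rewrite meval_flatten /rhs big_seq [RHS]big_seq.
  by apply: eq_bigr => q; rewrite mem_iota => /andP [_ Hq]; apply: piece_expand.
have F_torus r : (forall i, (i < 4)%N -> r i != 0) -> meval r F = 0.
  move=> Hr; have [x Hx] := ujet_onto (Hr 0%N isT) (Hr 1%N isT).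
  by rewrite (meval_ext F_size (fun i Hi => esym (Hx i Hi))) -F_rhs.
have coefQ e : coef (expand (Qs p)) e = 0.
  have [He|He] := eqVneq (size e) 4; last exact: coef_size (size_expand _) He.
  have := coef_torus F_size F_torus (piece_mon p e).
  rewrite coef_flatten (bigD1_seq p) ?mem_iota ?iota_uniq // big1_seq; last first.
    move=> q /andP [Hqp]; rewrite mem_iota => /andP [_ Hq].
    by rewrite coef_piece // ?(negbTE Hqp) // size_expand.
  rewrite /= coef_piece ?size_expand // eqxx addr0 => /eqP.
  rewrite !mulf_eq0 (negbTE (lead_cst_neq0 p)).
  by rewrite (negbTE (piece_coefs_mon_neq0 Hp He)) => /eqP.
by rewrite expandP (meval_coef0 _ coefQ).
Qed.

End Summands.

Theorem mainTheorem12 (R : numClosedFieldType) :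
  (forall P : term R 'I_10,
     exists P0 Q0 R0 S0 T0 U0 V0 : term R 'I_4,
     forall x : jvar -> R,
       comp0 P [:: Lam3; Lam5; Lam7; M8; Lam9; M10; N12; K12; H14; F16] x
       = comp0 P0 [:: Lam3; Lam5; M8; N12] x
         + ev0 x Lam7 * comp0 Q0 [:: Lam5; Lam7; M8; N12] x
         + ev0 x Lam9 * comp0 R0 [:: Lam7; M8; Lam9; N12] x
         + ev0 x M10 * comp0 S0 [:: M8; Lam9; M10; N12] x
         + ev0 x K12 * comp0 T0 [:: Lam9; M10; N12; K12] x
         + ev0 x H14 * comp0 U0 [:: Lam9; N12; K12; H14] x
         + ev0 x F16 * comp0 V0 [:: Lam9; K12; H14; F16] x)
  /\
  (forall P0 Q0 R0 S0 T0 U0 V0 : term R 'I_4,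
     (forall x : jvar -> R,
         comp0 P0 [:: Lam3; Lam5; M8; N12] x
         + ev0 x Lam7 * comp0 Q0 [:: Lam5; Lam7; M8; N12] x
         + ev0 x Lam9 * comp0 R0 [:: Lam7; M8; Lam9; N12] x
         + ev0 x M10 * comp0 S0 [:: M8; Lam9; M10; N12] x
         + ev0 x K12 * comp0 T0 [:: Lam9; M10; N12; K12] x
         + ev0 x H14 * comp0 U0 [:: Lam9; N12; K12; H14] x
         + ev0 x F16 * comp0 V0 [:: Lam9; K12; H14; F16] x = 0) ->
     forall rho : 'I_4 -> R,
       teval rho P0 = 0 /\ teval rho Q0 = 0 /\ teval rho R0 = 0 /\
       teval rho S0 = 0 /\ teval rho T0 = 0 /\ teval rho U0 = 0 /\
       teval rho V0 = 0).
Proof.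
split=> [P | P0 Q0 R0 S0 T0 U0 V0 H0 rho].
  have [Qs HQs] := rhs_of_mlist (gens_expand_cone P).
  exists (Qs 0%N), (Qs 1%N), (Qs 2%N), (Qs 3%N), (Qs 4%N), (Qs 5%N), (Qs 6%N) => x.
  by rewrite -rhsE HQs -gens_expand.
pose Qs := nth (tC 0) [:: P0; Q0; R0; S0; T0; U0; V0].
have Qs0 p : (p < 7)%N -> teval rho (Qs p) = 0.
  by move=> Hp; apply: (rhs_unique (Qs := Qs)) => // x; rewrite rhsE; apply: H0.
by do !split; [exact: (Qs0 0%N) | exact: (Qs0 1%N) | exact: (Qs0 2%N) |
  exact: (Qs0 3%N) | exact: (Qs0 4%N) | exact: (Qs0 5%N) | exact: (Qs0 6%N)].
Qed.
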